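(* Let $D=\{(x_n,y_n)\}_{n=0}^N$ with $x_0<x_1<\dots<x_N$, $I=[x_0,x_N]$, and $\mathcal{J}_D:=\{f\in\mathcal{C}(I): f(x_n)=y_n,\ n=0,\dots,N\}$. For $n=1,\dots,N$ let $L_n$ be the affine map with $L_n(x_0)=x_{n-1}$, $L_n(x_N)=x_n$, and let $\alpha_n,q_n\in\mathcal{C}(I)$ satisfy $\Lambda:=\max_n\|\alpha_n\|_\infty<1$ and the join-up conditions $\alpha_n(x_0)y_0+q_n(x_0)=y_{n-1}$, $\alpha_n(x_N)y_N+q_n(x_N)=y_n$. Define $\widehat{T}:\mathcal{J}_D\to\mathcal{J}_D$ by $\widehat{T}f(x):=\alpha_n(L_n^{-1}(x))\,f(L_n^{-1}(x))+q_n(L_n^{-1}(x))$ for $x\in[x_{n-1},x_n]$, $n=1,\dots,N$. Then $\widehat{T}$ can be extended to a continuous operator $\overline{T}:\mathcal{C}(I)\to\mathcal{J}_D$ (i.e. $\overline{T}|_{\mathcal{J}_D}=\widehat{T}$).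
   Context: $\mathcal{C}(I)$ denotes the Banach space of continuous real functions on $I$ with the supremum norm, and $\mathcal{J}_D$ carries the induced metric. *)

From mathcomp Require Import all_boot all_order all_algebra.
From mathcomp Require Import all_classical all_reals all_analysis.
Set Implicit Arguments. Unset Strict Implicit. Unset Printing Implicit Defensive.
Import Order.TTheory GRing.Theory Num.Theory numFieldNormedType.Exports.
Local Open Scope classical_set_scope.
Local Open Scope ring_scope.

(* Elements of C([a,b]) are represented by functions R -> R that are
   continuous on [a,b]; values outside [a,b] are irrelevant. *)
Definition CI (R : realType) (a b : R) (f : R -> R) : Prop :=
  {within `[a, b], continuous (f : R -> R)}.

Definition supnorm (R : realType) (a b : R) (f : R -> R) : R :=
  sup [set `|f t| | t in `[a, b]].

Definition JD (R : realType) (N : nat) (x y : nat -> R) (f : R -> R) : Prop :=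
  CI (x 0%N) (x N) f /\ forall n : nat, (n <= N)%N -> f (x n) = y n.

Definition Lmap (R : realType) (N : nat) (x : nat -> R) (n : nat) (t : R) : R :=
  x n.-1 + (x n - x n.-1) / (x N - x 0%N) * (t - x 0%N).

Definition Linv (R : realType) (N : nat) (x : nat -> R) (n : nat) (t : R) : R :=
  x 0%N + (x N - x 0%N) / (x n - x n.-1) * (t - x n.-1).

Definition Lambda (R : realType) (N : nat) (x : nat -> R) (alpha : nat -> R -> R) : R :=
  \big[Num.max/0]_(1 <= n < N.+1) supnorm (x 0%N) (x N) (alpha n).

(* Adding to f the affine function that corrects its values at x_0 and x_N
   "pins" f to the data at the endpoints; this is the identity on J_D and
   3-Lipschitz for the sup norm.  Applying the n-th map of T-hat to the pinned
   function gives a continuous piece on [x_{n-1}, x_n] taking the values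
   y_{n-1} and y_n at its ends (join-up conditions).  Clamping extends each
   piece continuously to the whole line, and a telescoping sum of the clamped
   pieces glues them into a continuous function interpolating D, which equals
   T-hat f when f is in J_D and is Lipschitz in f with constant 6 N Lambda. *)

From mathcomp Require Import all_boot all_order all_algebra.
From mathcomp Require Import all_classical all_reals all_analysis.
From mathcomp Require Import ring lra zify.
Import Order.TTheory GRing.Theory Num.Theory numFieldNormedType.Exports.
Local Open Scope classical_set_scope.
Local Open Scope ring_scope.

Set Implicit Arguments.
Unset Strict Implicit.
Unset Printing Implicit Defensive.

Section Clamp.
Context {R : realType}.
Implicit Types a b t : R.

Definition clamp a b t : R := Num.max a (Num.min t b).

Lemma continuous_clamp a b : continuous (clamp a b).
Proof.
move=> t; apply: (@continuous_max R R (cst a) (fun t => Num.min t b)).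
  exact: cvg_cst.
by apply: continuous_min; [exact: cvg_id | exact: cvg_cst].
Qed.

Lemma clamp_itv a b t : a <= b -> a <= clamp a b t <= b.
Proof. by move=> ab; rewrite /clamp le_max lexx ge_max ab ge_min lexx orbT. Qed.

Lemma clamp_id a b t : a <= t <= b -> clamp a b t = t.
Proof. by case/andP=> ta tb; rewrite /clamp (min_l tb) (max_r ta). Qed.

Lemma clamp_l a b t : a <= b -> t <= a -> clamp a b t = a.
Proof. by move=> ab ta; rewrite /clamp (min_l (le_trans ta ab)) (max_l ta). Qed.

Lemma clamp_r a b t : a <= b -> b <= t -> clamp a b t = b.
Proof. by move=> ab bt; rewrite /clamp (min_r bt) (max_r ab). Qed.

Lemma continuous_comp_clamp (h : R -> R) a b : a <= b ->
  {within `[a, b], continuous h} -> continuous (h \o clamp a b).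
Proof.
move=> ab /subspace_continuousP hc t.
have clamp_in u : clamp a b u \in `[a, b] by rewrite in_itv /= clamp_itv.
have to_within : clamp a b u @[u --> t] --> within `[a, b] (nbhs (clamp a b t)).
  move=> P P_near.
  have : \forall u \near t, clamp a b u \in `[a, b] -> P (clamp a b u).
    exact: continuous_clamp P_near.
  by apply: filterS => u; apply.
exact: cvg_comp to_within (hc _ (clamp_in t)).
Qed.

End Clamp.

Section SupNorm.
Context {R : realType}.
Variables a b : R.
Implicit Types f : R -> R.

Lemma supnorm_ge f t : {within `[a, b], continuous f} -> a <= t <= b ->
  `|f t| <= supnorm a b f.
Proof.
move=> fc tab; have ab : a <= b by case/andP: tab; exact: le_trans.
apply: ub_le_sup; last by exists t => //; rewrite /= in_itv.
have normf_cont : {within `[a, b], continuous (fun t => `|f t|)}.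
  by move=> u; apply: cvg_norm; exact: fc.
have [c _ c_max] := EVT_max ab normf_cont.
by exists `|f c| => _ [s sab <-]; exact: c_max.
Qed.

Lemma supnorm_le f e : a <= b -> (forall t, a <= t <= b -> `|f t| <= e) ->
  supnorm a b f <= e.
Proof.
move=> ab fe; apply: ge_sup.
  by exists `|f a|, a => //; rewrite /= in_itv /= lexx ab.
by move=> _ [t + <-]; rewrite /= in_itv /=; exact: fe.
Qed.

End SupNorm.

Section PinEnds.
Context {R : realType}.
Variables a b ya yb : R.
Implicit Types f g : R -> R.

Definition pin_ends f v : R :=
  f v + (ya - f a) * ((b - v) / (b - a)) + (yb - f b) * ((v - a) / (b - a)).

Lemma pin_ends_left f : a < b -> pin_ends f a = ya.
Proof.
move=> ab; have ba : b - a != 0 by rewrite subr_eq0 gt_eqF.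
by rewrite /pin_ends divff // subrr mul0r; ring.
Qed.

Lemma pin_ends_right f : a < b -> pin_ends f b = yb.
Proof.
move=> ab; have ba : b - a != 0 by rewrite subr_eq0 gt_eqF.
by rewrite /pin_ends divff // subrr mul0r; ring.
Qed.

Lemma pin_ends_id f v : f a = ya -> f b = yb -> pin_ends f v = f v.
Proof. by move=> fa fb; rewrite /pin_ends fa fb !subrr !mul0r !addr0. Qed.

Lemma continuous_pin_ends f : {within `[a, b], continuous f} ->
  {within `[a, b], continuous (pin_ends f)}.
Proof.
move=> fc.
have wa_cont : continuous (fun v => (ya - f a) * ((b - v) / (b - a))).
  move=> v; apply: cvgM; first exact: cvg_cst.
  by apply: cvgM; [apply: cvgB; [exact: cvg_cst | exact: cvg_id] | exact: cvg_cst].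
have wb_cont : continuous (fun v => (yb - f b) * ((v - a) / (b - a))).
  move=> v; apply: cvgM; first exact: cvg_cst.
  by apply: cvgM; [apply: cvgB; [exact: cvg_id | exact: cvg_cst] | exact: cvg_cst].
move=> v; apply: cvgD; first apply: cvgD; first exact: fc.
- exact: continuous_subspaceT wa_cont v.
- exact: continuous_subspaceT wb_cont v.
Qed.

Lemma pin_ends_dist f g (e : R) v :
  (forall t, a <= t <= b -> `|f t - g t| <= e) ->
  a <= v <= b -> `|pin_ends f v - pin_ends g v| <= 3 * e.
Proof.
move=> fge vab; have /andP[av vb] := vab; have ab := le_trans av vb.
have weight_le1 p : 0 <= p <= b - a -> `|p / (b - a)| <= 1.
  case/andP=> p0 pba; have [-> | ba0] := eqVneq (b - a) 0.
    by rewrite invr0 mulr0 normr0.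
  have ba : 0 < b - a by rewrite lt_def ba0 subr_ge0.
  by rewrite ger0_norm ?ler_pdivrMr ?mul1r // divr_ge0 // ltW.
have wa : `|(b - v) / (b - a)| <= 1 by apply: weight_le1; lra.
have wb : `|(v - a) / (b - a)| <= 1 by apply: weight_le1; lra.
have ea : `|g a - f a| <= e by rewrite distrC fge // lexx ab.
have eb : `|g b - f b| <= e by rewrite distrC fge // lexx ab.
have ev := fge v vab.
have -> : pin_ends f v - pin_ends g v = (f v - g v)
    + (g a - f a) * ((b - v) / (b - a)) + (g b - f b) * ((v - a) / (b - a)).
  by rewrite /pin_ends; ring.
have ea' := ler_pM (normr_ge0 _) (normr_ge0 _) ea wa.
have eb' := ler_pM (normr_ge0 _) (normr_ge0 _) eb wb.
apply: le_trans (ler_normD _ _) _; rewrite normrM.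
apply: le_trans (lerD (ler_normD _ _) (lexx _)) _; rewrite normrM; lra.
Qed.

End PinEnds.

Section Glue.
Context {R : realType}.
Variables (N : nat) (x y : nat -> R).
Hypothesis x_incr : forall n, (n < N)%N -> x n < x n.+1.

Lemma x_le i j : (i <= j <= N)%N -> x i <= x j.
Proof.
case/andP=> + jN; elim: j jN => [|j IH] jN; first by rewrite leqn0 => /eqP->.
rewrite leq_eqVlt ltnS => /orP[/eqP->//|ij].
by apply: le_trans (IH (ltnW jN) ij) _; apply/ltW/x_incr.
Qed.

Lemma x_pred_lt n : (1 <= n <= N)%N -> x n.-1 < x n.
Proof. by case: n => // n /andP[_ nN]; exact: x_incr. Qed.

(* For t in [x (m-1), x m], the terms n < m contribute y n - y (n-1) and the
   terms n > m vanish, so the sum telescopes to [g m t] once the [g n] match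
   [y] at the nodes. *)
Definition glue (g : nat -> R -> R) (t : R) : R :=
  y 0%N + \sum_(1 <= n < N.+1) (g n (clamp (x n.-1) (x n) t) - g n (x n.-1)).

Lemma continuous_glue g : (forall n, (1 <= n <= N)%N -> continuous (g n)) ->
  continuous (glue g).
Proof.
move=> gc t; apply: cvgD; first exact: cvg_cst.
under eq_cvg do rewrite big_seq.
rewrite big_seq; apply: cvg_big => [|n]; first exact: add_continuous.
rewrite mem_index_iota ltnS => /gc g_cont; apply: cvgB; last exact: cvg_cst.
exact: continuous_comp (@continuous_clamp _ (x n.-1) (x n) t) (g_cont _).
Qed.

Lemma glue_dist g h (e : R) :
  (forall n, (1 <= n <= N)%N -> forall s, `|g n s - h n s| <= e) ->
  forall t, `|glue g t - glue h t| <= 2 * N%:R * e.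
Proof.
move=> ghe t; rewrite /glue opprD addrACA subrr add0r -sumrB.
apply: le_trans (ler_norm_sum _ _ _) _.
apply: le_trans (_ : _ <= \sum_(1 <= n < N.+1) (2 * e)) _; last first.
  by rewrite sumr_const_nat subn1 /= -[_ *+ N]mulr_natr mulrAC.
apply: ler_sum_nat => n /andP[n1 nN].
have hn : (1 <= n <= N)%N by rewrite n1 -ltnS.
set c := clamp (x n.-1) (x n) t.
rewrite (_ : _ - _ = (g n c - h n c) - (g n (x n.-1) - h n (x n.-1))); last by ring.
apply: le_trans (ler_normB _ _) _.
by have := ghe n hn c; have := ghe n hn (x n.-1); lra.
Qed.

Section Matching.
Variable g : nat -> R -> R.
Hypothesis g_left : forall n, (1 <= n <= N)%N -> g n (x n.-1) = y n.-1.
Hypothesis g_right : forall n, (1 <= n <= N)%N -> g n (x n) = y n.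

Lemma glue_partial_sum m t k :
  (1 <= m <= N)%N -> x m.-1 <= t <= x m -> (k <= N)%N ->
  \sum_(1 <= n < k.+1) (g n (clamp (x n.-1) (x n) t) - g n (x n.-1)) =
  (if (k < m)%N then y k else g m t) - y 0%N.
Proof.
move=> /andP[m1 mN] /andP[mt tm].
elim: k => [_|k IH kN]; first by rewrite big_geq // m1 subrr.
have hk : (1 <= k.+1 <= N)%N by rewrite kN.
have xk := ltW (x_incr kN).
rewrite big_nat_recr //= IH ?(ltnW kN) //; case: (ltngtP k.+1 m) => km.
- have -> : clamp (x k) (x k.+1) t = x k.+1.
    by apply: clamp_r xk (le_trans _ mt); apply: x_le; lia.
  by rewrite g_right // (g_left hk); ring.
- have -> : clamp (x k) (x k.+1) t = x k.
    by apply: clamp_l xk (le_trans tm _); apply: x_le; lia.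
  by rewrite subrr addr0.
- move: mt tm; rewrite -km /= => mt tm.
  by rewrite clamp_id ?mt ?tm // (g_left hk); ring.
Qed.

Lemma glue_piece m t : (1 <= m <= N)%N -> x m.-1 <= t <= x m -> glue g t = g m t.
Proof.
move=> hm ht; rewrite /glue (glue_partial_sum hm ht (leqnn N)).
by case/andP: hm => _ mN; rewrite ltnNge mN addrC subrK.
Qed.

Lemma glue_node k : (k <= N)%N -> glue g (x k) = y k.
Proof.
case: k => [_|k kN].
  have [N0|N_gt0] := posnP N; first by rewrite /glue N0 big_geq ?addr0.
  have h1 : (1 <= 1 <= N)%N by rewrite N_gt0.
  by rewrite (glue_piece h1) ?(g_left h1) // lexx ltW ?x_incr.
have hk : (1 <= k.+1 <= N)%N by rewrite kN.
by rewrite (glue_piece hk) ?(g_right hk) // lexx ltW ?x_incr.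
Qed.

End Matching.
End Glue.

Section Operator.
Context {R : realType}.
Variables (N : nat) (x y : nat -> R) (alpha q : nat -> R -> R).
Hypothesis hx : forall n : nat, (n < N)%N -> x n < x n.+1.
Hypothesis halpha : forall n : nat, (1 <= n <= N)%N -> CI (x 0%N) (x N) (alpha n).
Hypothesis hq : forall n : nat, (1 <= n <= N)%N -> CI (x 0%N) (x N) (q n).
Hypothesis hjoin0 : forall n : nat, (1 <= n <= N)%N ->
  alpha n (x 0%N) * y 0%N + q n (x 0%N) = y n.-1.
Hypothesis hjoinN : forall n : nat, (1 <= n <= N)%N ->
  alpha n (x N) * y N + q n (x N) = y n.

Local Notation x0 := (x 0%N).
Local Notation xN := (x N).

Lemma x0_le_xN : x0 <= xN.
Proof. by apply: (x_le hx); rewrite leqnn. Qed.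

Lemma x0_lt_xN : (0 < N)%N -> x0 < xN.
Proof.
move=> N_gt0; have hN : (1 <= N <= N)%N by rewrite N_gt0 leqnn.
by apply: le_lt_trans (x_pred_lt hx hN); apply: (x_le hx); rewrite leq_pred.
Qed.

Lemma Linv_left n : Linv N x n (x n.-1) = x0.
Proof. by rewrite /Linv subrr mulr0 addr0. Qed.

Lemma Linv_right n : (1 <= n <= N)%N -> Linv N x n (x n) = xN.
Proof.
move=> hn.
have xn : x n - x n.-1 != 0 by rewrite subr_eq0 gt_eqF // (x_pred_lt hx).
by rewrite /Linv mulfVK // subrKC.
Qed.

Lemma Linv_itv n t : (1 <= n <= N)%N -> x n.-1 <= t <= x n ->
  x0 <= Linv N x n t <= xN.
Proof.
move=> hn /andP[t1 t2].
have d0 : 0 < x n - x n.-1 by rewrite subr_gt0 (x_pred_lt hx).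
set r := (t - x n.-1) / (x n - x n.-1).
have -> : Linv N x n t = x0 + (xN - x0) * r by rewrite /Linv /r mulrAC -mulrA.
have r0 : 0 <= r by apply: divr_ge0; lra.
have r1 : r <= 1 by rewrite /r ler_pdivrMr // mul1r; lra.
have := x0_le_xN => ?; apply/andP; split; nra.
Qed.

Lemma continuous_Linv n : continuous (Linv N x n).
Proof.
move=> t; apply: cvgD; first exact: cvg_cst.
by apply: cvgM; [exact: cvg_cst | apply: cvgB; [exact: cvg_id | exact: cvg_cst]].
Qed.

Lemma alpha_le_Lambda n u : (1 <= n <= N)%N -> x0 <= u <= xN ->
  `|alpha n u| <= Lambda N x alpha.
Proof.
move=> hn hu; apply: le_trans (supnorm_ge (halpha hn) hu) _.
by apply: (le_bigmax_seq _ n predT); rewrite ?mem_index_iota ?ltnS.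
Qed.

Lemma Lambda_ge0 : 0 <= Lambda N x alpha.
Proof. exact: bigmax_ge_id. Qed.

Definition pinned_map (f : R -> R) n v : R :=
  alpha n v * pin_ends x0 xN (y 0%N) (y N) f v + q n v.

Lemma continuous_pinned_map f n : CI x0 xN f -> (1 <= n <= N)%N ->
  {within `[x0, xN], continuous (pinned_map f n)}.
Proof.
move=> fc hn v; apply: cvgD; last exact: hq.
by apply: cvgM; [exact: halpha | exact: continuous_pin_ends].
Qed.

Definition piece f n : R -> R := pinned_map f n \o clamp x0 xN \o Linv N x n.

Lemma piece_left f n : (1 <= n <= N)%N -> piece f n (x n.-1) = y n.-1.
Proof.
move=> hn; have N_gt0 : (0 < N)%N by case/andP: hn; exact: leq_trans.
rewrite /piece /pinned_map /= Linv_left clamp_id ?lexx ?x0_le_xN //.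
by rewrite pin_ends_left ?x0_lt_xN ?hjoin0.
Qed.

Lemma piece_right f n : (1 <= n <= N)%N -> piece f n (x n) = y n.
Proof.
move=> hn; have N_gt0 : (0 < N)%N by case/andP: hn; exact: leq_trans.
rewrite /piece /pinned_map /= Linv_right // clamp_id ?lexx ?x0_le_xN //.
by rewrite pin_ends_right ?x0_lt_xN ?hjoinN.
Qed.

Lemma piece_JD f n t : JD N x y f -> (1 <= n <= N)%N -> x n.-1 <= t <= x n ->
  piece f n t = alpha n (Linv N x n t) * f (Linv N x n t) + q n (Linv N x n t).
Proof.
move=> [_ fy] hn ht; rewrite /piece /pinned_map /= clamp_id ?Linv_itv //.
by rewrite pin_ends_id ?fy.
Qed.

Lemma continuous_piece f n : CI x0 xN f -> (1 <= n <= N)%N -> continuous (piece f n).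
Proof.
move=> fc hn t; have Linv_cont := @continuous_Linv n.
have := continuous_comp_clamp x0_le_xN (continuous_pinned_map fc hn).
by move/(_ (Linv N x n t)); exact: continuous_comp (Linv_cont t).
Qed.

Lemma piece_dist f g e n s : (1 <= n <= N)%N ->
  (forall v, x0 <= v <= xN -> `|f v - g v| <= e) ->
  `|piece f n s - piece g n s| <= Lambda N x alpha * (3 * e).
Proof.
move=> hn fge; rewrite /piece /pinned_map /=; set u := clamp x0 xN _.
have hu : x0 <= u <= xN by exact: clamp_itv x0_le_xN.
rewrite (_ : _ - _ = alpha n u * (pin_ends x0 xN (y 0%N) (y N) f u
                               - pin_ends x0 xN (y 0%N) (y N) g u)); last by ring.
rewrite normrM; apply: ler_pM => //; first exact: alpha_le_Lambda.
exact: pin_ends_dist.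
Qed.

Definition Tbar f := glue N x y (piece f).

Lemma Tbar_JD f : CI x0 xN f -> JD N x y (Tbar f).
Proof.
move=> fc; split.
  apply: continuous_subspaceT; apply: continuous_glue => n.
  exact: continuous_piece.
by move=> k kN; rewrite /Tbar (glue_node hx (@piece_left f) (@piece_right f) kN).
Qed.

Lemma Tbar_JDE f n t : JD N x y f -> (1 <= n <= N)%N -> x n.-1 <= t <= x n ->
  Tbar f t = alpha n (Linv N x n t) * f (Linv N x n t) + q n (Linv N x n t).
Proof.
move=> fJ hn ht.
by rewrite /Tbar (glue_piece hx (@piece_left f) (@piece_right f) hn ht) piece_JD.
Qed.

Lemma Tbar_lipschitz f g : CI x0 xN f -> CI x0 xN g ->
  supnorm x0 xN (Tbar f \- Tbar g)
    <= 6 * N%:R * Lambda N x alpha * supnorm x0 xN (f \- g).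
Proof.
move=> fc gc; set s := supnorm x0 xN (f \- g).
have fgc : CI x0 xN (f \- g) by move=> v; apply: cvgB; [exact: fc | exact: gc].
have fgs v : x0 <= v <= xN -> `|f v - g v| <= s by exact: supnorm_ge fgc.
apply: supnorm_le x0_le_xN _ => t _.
rewrite (_ : 6 * _ * _ * _ = 2 * N%:R * (Lambda N x alpha * (3 * s))); last by ring.
by apply: glue_dist => n hn u; exact: piece_dist.
Qed.

Lemma Tbar_continuous f : CI x0 xN f -> forall eps : R, 0 < eps ->
  exists2 delta : R, 0 < delta &
    forall g, CI x0 xN g -> supnorm x0 xN (f \- g) < delta ->
      supnorm x0 xN (Tbar f \- Tbar g) < eps.
Proof.
move=> fc eps eps_gt0; set K := 6 * N%:R * Lambda N x alpha.
have K_ge0 : 0 <= K by rewrite !mulr_ge0 ?Lambda_ge0.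
exists (eps / (K + 1)) => [|g gc fg_lt]; first by rewrite divr_gt0 // ltr_wpDl.
apply: le_lt_trans (Tbar_lipschitz fc gc) _; rewrite -/K.
apply: le_lt_trans (ler_wpM2l K_ge0 (ltW fg_lt)) _.
by rewrite mulrA ltr_pdivrMr ?ltr_wpDl //; nra.
Qed.

End Operator.

Theorem theorem4p3 (R : realType) (N : nat) (x y : nat -> R)
  (alpha q : nat -> R -> R)
  (hx : forall n : nat, (n < N)%N -> x n < x n.+1)
  (halpha : forall n : nat, (1 <= n <= N)%N -> CI (x 0%N) (x N) (alpha n))
  (hq : forall n : nat, (1 <= n <= N)%N -> CI (x 0%N) (x N) (q n))
  (hLambda : Lambda N x alpha < 1)
  (hjoin0 : forall n : nat, (1 <= n <= N)%N ->
     alpha n (x 0%N) * y 0%N + q n (x 0%N) = y n.-1)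
  (hjoinN : forall n : nat, (1 <= n <= N)%N ->
     alpha n (x N) * y N + q n (x N) = y n) :
  exists Tbar : (R -> R) -> (R -> R),
    (* Tbar maps C(I) into J_D *)
    (forall f, CI (x 0%N) (x N) f -> JD N x y (Tbar f)) /\
    (* Tbar is continuous for the sup-norm metric on C(I) and J_D *)
    (forall f, CI (x 0%N) (x N) f -> forall eps : R, 0 < eps ->
       exists2 delta : R, 0 < delta &
         forall g, CI (x 0%N) (x N) g ->
           supnorm (x 0%N) (x N) (f \- g) < delta ->
           supnorm (x 0%N) (x N) (Tbar f \- Tbar g) < eps) /\
    (* Tbar restricted to J_D is That *)
    (forall f, JD N x y f ->
       forall n : nat, (1 <= n <= N)%N ->
       forall t, x n.-1 <= t <= x n ->
         Tbar f t = alpha n (Linv N x n t) * f (Linv N x n t)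
                    + q n (Linv N x n t)).
Proof.
exists (Tbar N x y alpha q); split; [|split].
- exact: Tbar_JD hx halpha hq hjoin0 hjoinN.
- exact: Tbar_continuous hx halpha.
- by move=> f fJ n hn t ht; rewrite (Tbar_JDE hx hjoin0 hjoinN fJ hn ht).
Qed.
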